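(* Let $\epsilon>0$ and $\omega\ge0$ be constants, $\phi_0$ a real constant, and $\omega(t)$ a real-valued function with $|\omega(t)|\le\omega$. Let $H^A(t)=[1+\omega(t)]I_z+\epsilon\cos\phi_0 I_y+\epsilon\sin\phi_0 I_x$ and $H^B=\epsilon\cos\phi_0 I_y+\epsilon\sin\phi_0 I_x$. Consider two single-qubit pure-state evolutions $\dot\rho^A_t=-i[H^A(t),\rho^A_t]$ and $\dot\rho^B_t=-i[H^B,\rho^B_t]$, both starting from the state with Bloch vector $(x_0,y_0,z_0)=(0,0,1)$, and let $z^A_t=\mathrm{tr}(\rho^A_t\sigma_z)$, $z^B_t=\mathrm{tr}(\rho^B_t\sigma_z)$. Then $z^A_t\ge z^B_t$ for all $t\in\big[0,\frac{\pi}{2\sqrt{4+\epsilon^2}}\big]$.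
   Context: $\sigma_x,\sigma_y,\sigma_z$ are the Pauli matrices $\begin{pmatrix}0&1\\1&0\end{pmatrix},\begin{pmatrix}0&-i\\i&0\end{pmatrix},\begin{pmatrix}1&0\\0&-1\end{pmatrix}$, $I_j=\frac12\sigma_j$, $[A,B]=AB-BA$, units with $\hbar=1$. The Bloch vector of a qubit state $\rho$ is $(x,y,z)=(\mathrm{tr}(\rho\sigma_x),\mathrm{tr}(\rho\sigma_y),\mathrm{tr}(\rho\sigma_z))$, so that $\rho=\frac12(I+x\sigma_x+y\sigma_y+z\sigma_z)$. *)

From Stdlib Require Export Reals.
From Coquelicot Require Export Coquelicot.

Open Scope R_scope.

(* 2x2 complex matrices, indices false = 0, true = 1 *)
Definition M2 := bool -> bool -> C.

Definition mmul (A B : M2) : M2 :=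
  fun i j => (A i false * B false j + A i true * B true j)%C.
Definition madd (A B : M2) : M2 := fun i j => (A i j + B i j)%C.
Definition msub (A B : M2) : M2 := fun i j => (A i j - B i j)%C.
Definition mscal (c : C) (A : M2) : M2 := fun i j => (c * A i j)%C.
Definition comm (A B : M2) : M2 := msub (mmul A B) (mmul B A).
Definition mtr (A : M2) : C := (A false false + A true true)%C.

Definition mk2 (a b c d : C) : M2 :=
  fun i j => match i, j with
             | false, false => a | false, true => b
             | true, false => c | true, true => d end.

Definition Id2 : M2 := mk2 1 0 0 1.
Definition sigma_x : M2 := mk2 0 1 1 0.
Definition sigma_y : M2 := mk2 0 (- Ci)%C Ci 0.
Definition sigma_z : M2 := mk2 1 0 0 (-1).

Definition Ix : M2 := mscal (RtoC (/2)) sigma_x.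
Definition Iy : M2 := mscal (RtoC (/2)) sigma_y.
Definition Iz : M2 := mscal (RtoC (/2)) sigma_z.

Definition bloch_state (x y z : R) : M2 :=
  mscal (RtoC (/2)) (madd Id2 (madd (mscal (RtoC x) sigma_x)
        (madd (mscal (RtoC y) sigma_y) (mscal (RtoC z) sigma_z)))).

Definition HA (eps phi0 : R) (wt : R -> R) (t : R) : M2 :=
  madd (mscal (RtoC (1 + wt t)) Iz)
       (madd (mscal (RtoC (eps * cos phi0)) Iy) (mscal (RtoC (eps * sin phi0)) Ix)).

Definition HB (eps phi0 : R) : M2 :=
  madd (mscal (RtoC (eps * cos phi0)) Iy) (mscal (RtoC (eps * sin phi0)) Ix).

Definition solves_vN (H : R -> M2) (rho : R -> M2) (rho0 : M2) : Prop :=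
  rho 0 = rho0 /\
  (forall i j, filterlim (fun s => rho s i j) (at_right 0) (locally (rho 0 i j))) /\
  (forall t, 0 < t -> forall i j,
      is_derive (fun s => rho s i j) t ((- Ci) * comm (H t) (rho t) i j)%C).

Definition zcoord (rho : M2) : R := Re (mtr (mmul rho sigma_z)).

(* Write rho = (I + r.sigma)/2 and H = (h.sigma)/2: the von Neumann equation becomes the Bloch
   equation r' = h x r, which keeps |r| <= 1.  The transverse part (eps sin phi0, eps cos phi0)
   of h has length eps, so z' = h_x y - h_y x satisfies |z'| <= eps sqrt(1 - z^2) whatever the
   longitudinal field: the polar angle acos z grows at speed at most eps, hence
   z^A_t >= cos (eps t) while eps t <= pi/2, which holds on the given interval.  Without
   longitudinal field z'' = - eps^2 z, so z^B_t = cos (eps t) exactly. *)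

From Stdlib Require Import Lra Psatz.
Open Scope R_scope.

Section RealLimits.
Context {F : (R -> Prop) -> Prop} {FF : Filter F}.

Lemma filterlim_Rplus (f g : R -> R) (a b : R) :
  filterlim f F (locally a) -> filterlim g F (locally b) ->
  filterlim (fun s => f s + g s) F (locally (a + b)).
Proof.
  intros Hf Hg. eapply filterlim_comp_2; [exact Hf | exact Hg |].
  apply (filterlim_plus (K := R_AbsRing) (V := R_NormedModule)).
Qed.

Lemma filterlim_Rmult (f g : R -> R) (a b : R) :
  filterlim f F (locally a) -> filterlim g F (locally b) ->
  filterlim (fun s => f s * g s) F (locally (a * b)).
Proof.
  intros Hf Hg. eapply filterlim_comp_2; [exact Hf | exact Hg |].
  apply (filterlim_mult (K := R_AbsRing)).
Qed.

Lemma filterlim_Ropp (f : R -> R) (a : R) :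
  filterlim f F (locally a) -> filterlim (fun s => - f s) F (locally (- a)).
Proof.
  intros Hf. eapply filterlim_comp; [exact Hf |].
  apply (filterlim_opp (K := R_AbsRing) (V := R_NormedModule)).
Qed.

Lemma filterlim_Rminus (f g : R -> R) (a b : R) :
  filterlim f F (locally a) -> filterlim g F (locally b) ->
  filterlim (fun s => f s - g s) F (locally (a - b)).
Proof. intros Hf Hg. apply filterlim_Rplus; [exact Hf | now apply filterlim_Ropp]. Qed.

Lemma filterlim_Re (f : R -> C) (z : C) :
  filterlim f F (locally z) -> filterlim (fun s => Re (f s)) F (locally (Re z)).
Proof.
  intros Hf. eapply filterlim_comp; [exact Hf |].
  apply (continuous_fst (U := R_UniformSpace) (V := R_UniformSpace) (fst z) (snd z)).
Qed.

Lemma filterlim_Im (f : R -> C) (z : C) :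
  filterlim f F (locally z) -> filterlim (fun s => Im (f s)) F (locally (Im z)).
Proof.
  intros Hf. eapply filterlim_comp; [exact Hf |].
  apply (continuous_snd (U := R_UniformSpace) (V := R_UniformSpace) (fst z) (snd z)).
Qed.

Lemma filterlim_pow (f : R -> R) (a : R) (n : nat) :
  filterlim f F (locally a) -> filterlim (fun s => f s ^ n) F (locally (a ^ n)).
Proof.
  intros Hf. apply (filterlim_comp _ _ _ f (fun x => x ^ n) _ _ _ Hf).
  apply (ex_derive_continuous (V := R_NormedModule) (fun x => x ^ n)). auto_derive. trivial.
Qed.

End RealLimits.

Lemma is_derive_Re (f : R -> C) (t : R) (v : C) :
  is_derive f t v -> is_derive (fun s => Re (f s)) t (Re v).
Proof.
  intros Hf. eapply filterdiff_ext_lin.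
  - apply (filterdiff_comp f (fun z : C => Re z)); [exact Hf |].
    apply filterdiff_linear, (is_linear_fst (U := R_NormedModule) (V := R_NormedModule)).
  - reflexivity.
Qed.

Lemma is_derive_Im (f : R -> C) (t : R) (v : C) :
  is_derive f t v -> is_derive (fun s => Im (f s)) t (Im v).
Proof.
  intros Hf. eapply filterdiff_ext_lin.
  - apply (filterdiff_comp f (fun z : C => Im z)); [exact Hf |].
    apply filterdiff_linear, (is_linear_snd (U := R_NormedModule) (V := R_NormedModule)).
  - reflexivity.
Qed.

Lemma filterlim_at_right_of_ex_derive (g : R -> R) (x : R) :
  ex_derive g x -> filterlim g (at_right x) (locally (g x)).
Proof.
  intros Hg. apply (filterlim_filter_le_1 _ (filter_le_within _)).
  exact (ex_derive_continuous (V := R_NormedModule) g x Hg).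
Qed.

Lemma le_initial_of_derive_nonpos (f : R -> R) :
  filterlim f (at_right 0) (locally (f 0)) ->
  (forall s, 0 < s -> exists d, is_derive f s d /\ d <= 0) ->
  forall t, 0 <= t -> f t <= f 0.
Proof.
  intros Hf0 Hdf t Ht.
  destruct (Req_dec t 0) as [-> | Ht0]; [lra |].
  assert (HD : forall c, 0 < c -> is_derive f c (Derive f c) /\ Derive f c <= 0).
  { intros c Hc. destruct (Hdf c Hc) as [d [Hd Hle]].
    rewrite (is_derive_unique f c d Hd). split; assumption. }
  assert (Hdecr : forall s, 0 < s < t -> f t <= f s).
  { intros s Hs.
    destruct (MVT_cor2 f (Derive f) s t) as [c [Hc Hcs]]; [lra | |].
    - intros c Hc. apply is_derive_Reals, HD. lra.
    - assert (Derive f c <= 0) by (apply HD; lra). nra. }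
  apply Rnot_lt_le. intros Hlt.
  assert (Hnear : at_right 0 (fun s => f s < f t /\ 0 < s < t)).
  { apply filter_and.
    - apply (Hf0 (fun y => y < f t)). exists (mkposreal (f t - f 0) ltac:(lra)).
      intros y Hy. change (Rabs (y - f 0) < f t - f 0) in Hy. apply Rabs_def2 in Hy. lra.
    - exists (mkposreal t ltac:(lra)). intros y Hy Hy0.
      change (Rabs (y - 0) < t) in Hy. apply Rabs_def2 in Hy. lra. }
  destruct (filter_ex _ Hnear) as [s [Hfs Hs]].
  specialize (Hdecr s Hs). lra.
Qed.

Lemma is_derive_acos (x : R) :
  -1 < x < 1 -> is_derive acos x (-1 / sqrt (1 - x ^ 2)).
Proof.
  intros Hx. apply is_derive_Reals.
  replace (x ^ 2) with (x²) by (unfold Rsqr; ring).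
  rewrite <- (derive_pt_acos x Hx).
  apply derive_pt_eq_1 with (pr := derivable_pt_acos x Hx). reflexivity.
Qed.

Lemma acos_le_of_derive_bound (u du : R -> R) (e : R) :
  0 <= e ->
  filterlim u (at_right 0) (locally (u 0)) ->
  (forall s, 0 <= s -> -1 < u s < 1) ->
  (forall s, 0 < s -> is_derive u s (du s)) ->
  (forall s, 0 < s -> du s ^ 2 <= e ^ 2 * (1 - u s ^ 2)) ->
  forall t, 0 <= t -> acos (u t) <= acos (u 0) + e * t.
Proof.
  intros He Hu0 Hrange Hdu Hbound t Ht.
  set (f := fun s => acos (u s) - e * s).
  enough (f t <= f 0) by (unfold f in *; lra).
  apply (le_initial_of_derive_nonpos f); [| | exact Ht].
  - apply filterlim_Rminus.
    + eapply filterlim_comp; [exact Hu0 |].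
      apply (ex_derive_continuous (V := R_NormedModule)).
      eexists. apply is_derive_acos, Hrange. lra.
    + apply (filterlim_at_right_of_ex_derive (fun s => e * s)). auto_derive. trivial.
  - intros s Hs. exists (du s * (-1 / sqrt (1 - u s ^ 2)) - e * 1). split.
    { apply (is_derive_minus (fun s => acos (u s)) (fun s => e * s)).
      - apply (is_derive_comp acos u); [apply is_derive_acos, Hrange; lra | apply Hdu, Hs].
      - apply is_derive_scal, (is_derive_id (K := R_AbsRing)). }
    pose proof (Hrange s (Rlt_le _ _ Hs)) as Hus.
    pose proof (Hbound s Hs) as Hb.
    assert (Hq : 0 < sqrt (1 - u s ^ 2)) by (apply sqrt_lt_R0; nra).
    assert (Hq2 : sqrt (1 - u s ^ 2) ^ 2 = 1 - u s ^ 2)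
      by (rewrite <- Rsqr_pow2; apply Rsqr_sqrt; nra).
    set (q := sqrt (1 - u s ^ 2)) in *.
    assert (Hsq : du s ^ 2 <= (e * q) ^ 2) by (rewrite Rpow_mult_distr, Hq2; exact Hb).
    assert (Hdq : - du s <= e * q).
    { apply Rnot_lt_le. intros Hlt. assert (0 <= e * q) by (apply Rmult_le_pos; lra). nra. }
    replace (du s * (-1 / q) - e * 1) with ((- du s - e * q) / q) by (field; lra).
    apply Rmult_le_0_r; [lra | apply Rlt_le, Rinv_0_lt_compat, Hq].
Qed.

Lemma cos_le_of_derive_bound (z dz : R -> R) (e : R) :
  0 < e -> z 0 = 1 ->
  filterlim z (at_right 0) (locally (z 0)) ->
  (forall s, 0 < s -> is_derive z s (dz s)) ->
  (forall s, 0 < s -> dz s ^ 2 <= e ^ 2 * (1 - z s ^ 2)) ->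
  forall t, 0 <= t -> e * t <= PI / 2 -> cos (e * t) <= z t.
Proof.
  intros He Hz0 Hzr Hdz Hbound t Ht HeT.
  pose proof PI_RGT_0 as Hpi.
  assert (Hz1 : forall s, 0 <= s -> z s ^ 2 <= 1).
  { intros s Hs. destruct (Req_dec s 0) as [-> | Hs0]; [rewrite Hz0; lra |].
    pose proof (Hbound s ltac:(lra)). pose proof (pow2_ge_0 (dz s)).
    assert (0 < e ^ 2) by (apply pow_lt; lra). nra. }
  (* [acos] is only differentiable inside (-1,1), so compare [cos a * z] instead and let [a]
     go to 0. *)
  assert (Hreg : forall a, 0 < a < PI / 2 -> cos a * cos (e * t) - sin a <= cos a * z t).
  { intros a Ha.
    assert (Hca : 0 < cos a < 1).
    { split; [apply cos_gt_0; lra |].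
      rewrite <- cos_0. apply cos_decreasing_1; lra. }
    assert (Hacos : acos (cos a * z t) <= acos (cos a * z 0) + e * t).
    { apply (acos_le_of_derive_bound (fun s => cos a * z s) (fun s => cos a * dz s));
        [lra | | | | | exact Ht].
      - apply filterlim_Rmult; [apply filterlim_const | exact Hzr].
      - intros s Hs. pose proof (Hz1 s Hs). nra.
      - intros s Hs. apply is_derive_scal, Hdz, Hs.
      - intros s Hs. rewrite !Rpow_mult_distr.
        assert (cos a ^ 2 * dz s ^ 2 <= cos a ^ 2 * (e ^ 2 * (1 - z s ^ 2)))
          by (apply Rmult_le_compat_l; [apply pow2_ge_0 | apply Hbound, Hs]).
        assert (0 <= e ^ 2 * (1 - cos a ^ 2)) by (apply Rmult_le_pos; [apply pow2_ge_0 | nra]).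
        nra. }
    rewrite Hz0, Rmult_1_r, acos_cos in Hacos by lra.
    assert (Hcos : cos (a + e * t) <= cos a * z t).
    { rewrite <- (cos_acos (cos a * z t)) by (pose proof (Hz1 t Ht); nra).
      pose proof (acos_bound (cos a * z t)). apply cos_decr_1; nra. }
    rewrite cos_plus in Hcos.
    pose proof (SIN_bound (e * t)). assert (0 <= sin a) by (apply sin_ge_0; lra). nra. }
  apply Rnot_lt_le. intros Hlt.
  set (g := cos (e * t) - z t).
  assert (Hg : 0 < g) by (unfold g; lra).
  set (a := Rmin (g / 2) (PI / 3)).
  assert (Ha : 0 < a <= g / 2).
  { split; [apply Rmin_glb_lt; lra | apply Rmin_l]. }
  assert (HaPI : a <= PI / 3) by apply Rmin_r.
  assert (Hca : 1 / 2 <= cos a) by (rewrite <- cos_PI3; apply cos_decr_1; lra).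
  pose proof (Hreg a ltac:(lra)). pose proof (sin_lt_x a (proj1 Ha)).
  unfold g in *. nra.
Qed.

Lemma cos_eq_of_harmonic (z w : R -> R) (e : R) :
  e <> 0 -> z 0 = 1 -> w 0 = 0 ->
  filterlim z (at_right 0) (locally (z 0)) ->
  filterlim w (at_right 0) (locally (w 0)) ->
  (forall s, 0 < s -> is_derive z s (w s)) ->
  (forall s, 0 < s -> is_derive w s (- e ^ 2 * z s)) ->
  forall t, 0 <= t -> z t = cos (e * t).
Proof.
  intros He Hz0 Hw0 Hzr Hwr Hz Hw t Ht.
  (* The energy of the solution [z - cos (e * _)] of [y'' = - e ^ 2 y]; it is conserved and
     vanishes at 0. *)
  set (E := fun s => e ^ 2 * (z s - cos (e * s)) ^ 2 + (w s + e * sin (e * s)) ^ 2).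
  assert (HE : E t <= E 0).
  { apply (le_initial_of_derive_nonpos E); [| | exact Ht].
    - assert (Hcos : filterlim (fun s => cos (e * s)) (at_right 0) (locally (cos (e * 0))))
        by (apply (filterlim_at_right_of_ex_derive (fun s => cos (e * s))); auto_derive; trivial).
      assert (Hsin : filterlim (fun s => e * sin (e * s)) (at_right 0) (locally (e * sin (e * 0))))
        by (apply (filterlim_at_right_of_ex_derive (fun s => e * sin (e * s)));
            auto_derive; trivial).
      assert (Hzc := filterlim_Rminus _ _ _ _ Hzr Hcos).
      assert (Hws := filterlim_Rplus _ _ _ _ Hwr Hsin).
      apply filterlim_Rplus; [apply filterlim_Rmult; [apply filterlim_const |] |];
        apply filterlim_pow; assumption.
    - intros s Hs. exists 0. split; [| lra].
      assert (ex_derive z s) by (exists (w s); apply Hz, Hs).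
      assert (ex_derive w s) by (exists (- e ^ 2 * z s); apply Hw, Hs).
      unfold E. auto_derive; [repeat split; assumption |].
      replace (Derive (fun x : R => z x) s) with (w s)
        by (symmetry; apply is_derive_unique, Hz, Hs).
      replace (Derive (fun x : R => w x) s) with (- e ^ 2 * z s)
        by (symmetry; apply is_derive_unique, Hw, Hs).
      simpl. ring. }
  assert (HE0 : E 0 = 0) by (unfold E; rewrite Hz0, Hw0, Rmult_0_r, cos_0, sin_0; ring).
  rewrite HE0 in HE. unfold E in HE.
  assert (0 < e ^ 2) by (apply pow2_gt_0; exact He).
  pose proof (pow2_ge_0 (w t + e * sin (e * t))).
  assert (Hd : (z t - cos (e * t)) ^ 2 <= 0).
  { apply (Rmult_le_reg_l (e ^ 2)); lra. }
  apply Rminus_diag_uniq, Rsqr_0_uniq. rewrite Rsqr_pow2.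
  apply Rle_antisym; [exact Hd | apply pow2_ge_0].
Qed.

Definition spin_ham (hx hy hz : R) : M2 :=
  madd (mscal (RtoC hz) Iz) (madd (mscal (RtoC hy) Iy) (mscal (RtoC hx) Ix)).

(* Real parts of tr(M sigma_x), tr(M sigma_y), tr(M sigma_z). *)
Definition bloch_x (M : M2) : R := Re (M false true) + Re (M true false).
Definition bloch_y (M : M2) : R := Im (M true false) - Im (M false true).
Definition bloch_z (M : M2) : R := Re (M false false) - Re (M true true).

Definition vN_rhs (H M : M2) : M2 := fun i j => (- Ci * comm H M i j)%C.

Ltac expand_M2 :=
  cbv beta iota delta [spin_ham bloch_x bloch_y bloch_z bloch_state zcoord comm mtr msub mmul
    madd mscal vN_rhs Ix Iy Iz Id2 sigma_x sigma_y sigma_z mk2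
    Cplus Cminus Copp Cmult RtoC Ci Re Im];
  cbn [fst snd].

Lemma zcoord_bloch_z (M : M2) : zcoord M = bloch_z M.
Proof. expand_M2. ring. Qed.

Lemma bloch_state_z_up :
  bloch_x (bloch_state 0 0 1) = 0 /\ bloch_y (bloch_state 0 0 1) = 0 /\
  bloch_z (bloch_state 0 0 1) = 1.
Proof. expand_M2. repeat split; field. Qed.

Lemma bloch_vN_rhs (hx hy hz : R) (M : M2) :
  let D := vN_rhs (spin_ham hx hy hz) M in
  bloch_x D = hy * bloch_z M - hz * bloch_y M /\
  bloch_y D = hz * bloch_x M - hx * bloch_z M /\
  bloch_z D = hx * bloch_y M - hy * bloch_x M.
Proof. expand_M2. repeat split; field. Qed.

Lemma is_derive_bloch (rho : R -> M2) (D : M2) (t : R) :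
  (forall i j, is_derive (fun s => rho s i j) t (D i j)) ->
  is_derive (fun s => bloch_x (rho s)) t (bloch_x D) /\
  is_derive (fun s => bloch_y (rho s)) t (bloch_y D) /\
  is_derive (fun s => bloch_z (rho s)) t (bloch_z D).
Proof.
  intros Hd.
  split; [| split];
    [apply (is_derive_plus (fun s => Re (rho s false true)) (fun s => Re (rho s true false)))
    | apply (is_derive_minus (fun s => Im (rho s true false)) (fun s => Im (rho s false true)))
    | apply (is_derive_minus (fun s => Re (rho s false false)) (fun s => Re (rho s true true)))];
    first [apply is_derive_Re | apply is_derive_Im]; apply Hd.
Qed.

Lemma filterlim_bloch {F : (R -> Prop) -> Prop} {FF : Filter F} (rho : R -> M2) (M : M2) :
  (forall i j, filterlim (fun s => rho s i j) F (locally (M i j))) ->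
  filterlim (fun s => bloch_x (rho s)) F (locally (bloch_x M)) /\
  filterlim (fun s => bloch_y (rho s)) F (locally (bloch_y M)) /\
  filterlim (fun s => bloch_z (rho s)) F (locally (bloch_z M)).
Proof.
  intros Hl.
  split; [| split]; [apply filterlim_Rplus | apply filterlim_Rminus | apply filterlim_Rminus];
    first [apply filterlim_Re | apply filterlim_Im]; apply Hl.
Qed.

Lemma solves_vN_ext (H1 H2 : R -> M2) (rho : R -> M2) (rho0 : M2) :
  (forall t i j, H1 t i j = H2 t i j) -> solves_vN H1 rho rho0 -> solves_vN H2 rho rho0.
Proof.
  intros HH [H0 [Hc Hd]]. split; [exact H0 | split; [exact Hc |]].
  intros t Ht i j. replace (comm (H2 t) (rho t) i j) with (comm (H1 t) (rho t) i j).
  - apply Hd, Ht.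
  - unfold comm, msub, mmul. rewrite !HH. reflexivity.
Qed.

Section BlochEquations.

Variables (hx hy hz : R -> R) (rho : R -> M2).
Hypothesis Hsol : solves_vN (fun t => spin_ham (hx t) (hy t) (hz t)) rho (bloch_state 0 0 1).

Lemma bloch_initial :
  bloch_x (rho 0) = 0 /\ bloch_y (rho 0) = 0 /\ bloch_z (rho 0) = 1.
Proof. destruct Hsol as [-> _]. exact bloch_state_z_up. Qed.

Lemma bloch_right_continuous :
  filterlim (fun s => bloch_x (rho s)) (at_right 0) (locally (bloch_x (rho 0))) /\
  filterlim (fun s => bloch_y (rho s)) (at_right 0) (locally (bloch_y (rho 0))) /\
  filterlim (fun s => bloch_z (rho s)) (at_right 0) (locally (bloch_z (rho 0))).
Proof. apply filterlim_bloch, Hsol. Qed.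

Lemma bloch_equations (t : R) : 0 < t ->
  is_derive (fun s => bloch_x (rho s)) t (hy t * bloch_z (rho t) - hz t * bloch_y (rho t)) /\
  is_derive (fun s => bloch_y (rho s)) t (hz t * bloch_x (rho t) - hx t * bloch_z (rho t)) /\
  is_derive (fun s => bloch_z (rho s)) t (hx t * bloch_y (rho t) - hy t * bloch_x (rho t)).
Proof.
  intros Ht. destruct (bloch_vN_rhs (hx t) (hy t) (hz t) (rho t)) as [Ex [Ey Ez]].
  rewrite <- Ex, <- Ey, <- Ez. apply is_derive_bloch, Hsol, Ht.
Qed.

Lemma bloch_norm_le_one (t : R) : 0 <= t ->
  bloch_x (rho t) ^ 2 + bloch_y (rho t) ^ 2 + bloch_z (rho t) ^ 2 <= 1.
Proof.
  intros Ht. destruct bloch_initial as [Hx0 [Hy0 Hz0]].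
  destruct bloch_right_continuous as [Lx [Ly Lz]].
  set (N := fun s => bloch_x (rho s) ^ 2 + bloch_y (rho s) ^ 2 + bloch_z (rho s) ^ 2).
  replace 1 with (N 0) by (unfold N; rewrite Hx0, Hy0, Hz0; ring).
  apply (le_initial_of_derive_nonpos N); [| | exact Ht].
  - unfold N. apply filterlim_Rplus; [apply filterlim_Rplus |]; apply filterlim_pow; assumption.
  - intros s Hs. destruct (bloch_equations s Hs) as [Dx [Dy Dz]].
    eexists. split.
    { apply (is_derive_plus (fun s => bloch_x (rho s) ^ 2 + bloch_y (rho s) ^ 2)
                          (fun s => bloch_z (rho s) ^ 2));
      [apply (is_derive_plus (fun s => bloch_x (rho s) ^ 2) (fun s => bloch_y (rho s) ^ 2)) |];
      apply is_derive_pow; eassumption. }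
    unfold plus. simpl. apply Req_le. ring.
Qed.

End BlochEquations.

Lemma cos_le_bloch_z (hx hy hz : R -> R) (rho : R -> M2) (e : R) :
  0 < e -> (forall t, hx t ^ 2 + hy t ^ 2 <= e ^ 2) ->
  solves_vN (fun t => spin_ham (hx t) (hy t) (hz t)) rho (bloch_state 0 0 1) ->
  forall t, 0 <= t -> e * t <= PI / 2 -> cos (e * t) <= bloch_z (rho t).
Proof.
  intros He Hh Hsol.
  destruct (bloch_initial _ _ _ _ Hsol) as [_ [_ Hz0]].
  destruct (bloch_right_continuous _ _ _ _ Hsol) as [_ [_ Lz]].
  apply (cos_le_of_derive_bound _ (fun s => hx s * bloch_y (rho s) - hy s * bloch_x (rho s))
           e He Hz0 Lz).
  - intros s Hs. apply (bloch_equations _ _ _ _ Hsol s Hs).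
  - intros s Hs.
    pose proof (bloch_norm_le_one _ _ _ _ Hsol s (Rlt_le _ _ Hs)) as Hn.
    set (x := bloch_x (rho s)) in *. set (y := bloch_y (rho s)) in *.
    set (z := bloch_z (rho s)) in *.
    assert (Hlagrange : (hx s * y - hy s * x) ^ 2 + (hx s * x + hy s * y) ^ 2
                        = (hx s ^ 2 + hy s ^ 2) * (x ^ 2 + y ^ 2)) by ring.
    assert ((hx s ^ 2 + hy s ^ 2) * (x ^ 2 + y ^ 2) <= e ^ 2 * (x ^ 2 + y ^ 2))
      by (apply Rmult_le_compat_r; [nra | apply Hh]).
    assert (e ^ 2 * (x ^ 2 + y ^ 2) <= e ^ 2 * (1 - z ^ 2))
      by (apply Rmult_le_compat_l; [apply pow2_ge_0 | lra]).
    pose proof (pow2_ge_0 (hx s * x + hy s * y)). lra.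
Qed.

Lemma bloch_z_eq_cos (hx hy : R) (rho : R -> M2) (e : R) :
  e <> 0 -> hx ^ 2 + hy ^ 2 = e ^ 2 ->
  solves_vN (fun _ => spin_ham hx hy 0) rho (bloch_state 0 0 1) ->
  forall t, 0 <= t -> bloch_z (rho t) = cos (e * t).
Proof.
  intros He Hh Hsol.
  destruct (bloch_initial (fun _ => hx) (fun _ => hy) (fun _ => 0) rho Hsol) as [Hx0 [Hy0 Hz0]].
  destruct (bloch_right_continuous (fun _ => hx) (fun _ => hy) (fun _ => 0) rho Hsol)
    as [Lx [Ly Lz]].
  apply (cos_eq_of_harmonic _ (fun s => hx * bloch_y (rho s) - hy * bloch_x (rho s)) e He Hz0).
  - rewrite Hx0, Hy0. ring.
  - exact Lz.
  - apply filterlim_Rminus; apply filterlim_Rmult; try apply filterlim_const; assumption.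
  - intros s Hs. apply (bloch_equations (fun _ => hx) (fun _ => hy) (fun _ => 0) rho Hsol s Hs).
  - intros s Hs.
    destruct (bloch_equations (fun _ => hx) (fun _ => hy) (fun _ => 0) rho Hsol s Hs)
      as [Dx [Dy _]].
    replace (- e ^ 2 * bloch_z (rho s))
      with (hx * (0 * bloch_x (rho s) - hx * bloch_z (rho s))
            - hy * (hy * bloch_z (rho s) - 0 * bloch_y (rho s))) by (rewrite <- Hh; ring).
    apply (is_derive_minus (fun s => hx * bloch_y (rho s)) (fun s => hy * bloch_x (rho s)));
      apply is_derive_scal; assumption.
Qed.

Lemma HB_spin_ham (eps phi0 : R) (i j : bool) :
  HB eps phi0 i j = spin_ham (eps * sin phi0) (eps * cos phi0) 0 i j.
Proof. destruct i, j; expand_M2; apply injective_projections; simpl; ring. Qed.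

Theorem lemma2 (eps w phi0 : R) (wt : R -> R) (rhoA rhoB : R -> M2) :
  0 < eps -> 0 <= w ->
  (forall t, Rabs (wt t) <= w) ->
  solves_vN (HA eps phi0 wt) rhoA (bloch_state 0 0 1) ->
  solves_vN (fun _ => HB eps phi0) rhoB (bloch_state 0 0 1) ->
  forall t, 0 <= t <= PI / (2 * sqrt (4 + eps ^ 2)) ->
    zcoord (rhoA t) >= zcoord (rhoB t).
Proof.
  intros Heps _ _ HsA HsB t [Ht0 Ht1].
  set (hx := eps * sin phi0). set (hy := eps * cos phi0).
  assert (Hh : hx ^ 2 + hy ^ 2 = eps ^ 2).
  { unfold hx, hy. rewrite <- (Rmult_1_r (eps ^ 2)), <- (sin2_cos2 phi0). unfold Rsqr. ring. }
  assert (HeT : eps * t <= PI / 2).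
  { assert (Hsq : eps < sqrt (4 + eps ^ 2)).
    { rewrite <- (sqrt_pow2 eps) at 1 by lra. apply sqrt_lt_1; nra. }
    apply Rle_trans with (sqrt (4 + eps ^ 2) * t); [nra |].
    apply (Rmult_le_compat_l (sqrt (4 + eps ^ 2))) in Ht1; [| lra].
    replace (PI / 2) with (sqrt (4 + eps ^ 2) * (PI / (2 * sqrt (4 + eps ^ 2)))) by (field; lra).
    exact Ht1. }
  apply Rle_ge. rewrite !zcoord_bloch_z.
  rewrite (bloch_z_eq_cos hx hy rhoB eps ltac:(lra) Hh); [| | exact Ht0].
  - apply (cos_le_bloch_z (fun _ => hx) (fun _ => hy) (fun s => 1 + wt s) rhoA eps Heps);
      [intros; lra | exact HsA | exact Ht0 | exact HeT].
  - apply (solves_vN_ext (fun _ => HB eps phi0)); [intros; apply HB_spin_ham | exact HsB].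
Qed.
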